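(* Let $\mathbb{X}$ be a real or complex Banach space with norm $|\cdot|$, let $k\ge 1$ be an integer, and let $f_n:\mathbb{X}^{k+1}\to\mathbb{X}$, $n=0,1,2,\dots$, be functions. Assume there is a real number $\alpha\in(0,1)$ such that for every $n$ and all $(\xi_0,\xi_1,\dots,\xi_k)\in\mathbb{X}^{k+1}$, $$|f_n(\xi_0,\xi_1,\dots,\xi_k)|\le \alpha\max\{|\xi_0|,\dots,|\xi_k|\}.$$ Then every solution $\{x_n\}$ of the difference equation $x_{n+1}=f_n(x_n,x_{n-1},\dots,x_{n-k})$, $n\ge 0$, with initial values $x_0,x_{-1},\dots,x_{-k}\in\mathbb{X}$ satisfies, for all $n\ge 1$, $$|x_n|\le \alpha^{n/(k+1)}\max\{|x_0|,|x_{-1}|,\dots,|x_{-k}|\}.$$ In particular, the origin is globally exponentially stable.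
   Context: A solution of $x_{n+1}=f_n(x_n,\dots,x_{n-k})$ is the sequence $\{x_n\}_{n\ge -k}$ generated by iteration from given initial values $x_0,x_{-1},\dots,x_{-k}$. The origin is called globally exponentially stable if every solution satisfies $|x_n|\le c^n\mu$ for all $n$, where $c\in(0,1)$ and $\mu>0$ are real constants and $c$ does not depend on the initial values. *)

From Stdlib Require Import Reals ZArith.
From mathcomp Require Import ssreflect ssrfun ssrbool eqtype ssrnat seq fintype bigop.
Set Implicit Arguments.
Unset Strict Implicit.

Open Scope R_scope.

(* A complex Banach space is in particular a real Banach space with
   the same norm, so this covers both cases of the paper. *)
Record BanachSpace := {
  carrier :> Type;
  vzero : carrier;
  vadd : carrier -> carrier -> carrier;
  vopp : carrier -> carrier;
  vscal : R -> carrier -> carrier;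
  vnorm : carrier -> R;
  vadd_assoc : forall u v w, vadd u (vadd v w) = vadd (vadd u v) w;
  vadd_comm : forall u v, vadd u v = vadd v u;
  vadd_0 : forall u, vadd u vzero = u;
  vadd_opp : forall u, vadd u (vopp u) = vzero;
  vscal_1 : forall u, vscal 1 u = u;
  vscal_assoc : forall a b u, vscal a (vscal b u) = vscal (a * b) u;
  vscal_distr_l : forall a u v, vscal a (vadd u v) = vadd (vscal a u) (vscal a v);
  vscal_distr_r : forall a b u, vscal (a + b) u = vadd (vscal a u) (vscal b u);
  vnorm_nonneg : forall u, 0 <= vnorm u;
  vnorm_eq0 : forall u, vnorm u = 0 -> u = vzero;
  vnorm_scal : forall a u, vnorm (vscal a u) = Rabs a * vnorm u;
  vnorm_triangle : forall u v, vnorm (vadd u v) <= vnorm u + vnorm v;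
  vcomplete : forall s : nat -> carrier,
    (forall eps, eps > 0 -> exists N, forall m n, (N <= m)%nat -> (N <= n)%nat ->
        vnorm (vadd (s m) (vopp (s n))) < eps) ->
    exists l, forall eps, eps > 0 -> exists N, forall n, (N <= n)%nat ->
        vnorm (vadd (s n) (vopp l)) < eps
}.

(* max{ g 0, ..., g k } for nonnegative g (0 is neutral on nonnegatives). *)
Definition maxk (k : nat) (g : 'I_k.+1 -> R) : R := \big[Rmax/0]_(i < k.+1) g i.

Definition is_solution (X : BanachSpace) (k : nat)
    (f : nat -> ('I_k.+1 -> X) -> X) (x : Z -> X) : Prop :=
  forall n : nat,
    x (Z.of_nat n + 1)%Z = f n (fun i : 'I_k.+1 => x (Z.of_nat n - Z.of_nat i)%Z).

Definition glob_exp_stable (X : BanachSpace) (k : nat)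
    (f : nat -> ('I_k.+1 -> X) -> X) : Prop :=
  exists c : R, 0 < c < 1 /\
    forall x : Z -> X, is_solution f x ->
      exists mu : R, mu > 0 /\
        forall n : Z, (- Z.of_nat k <= n)%Z -> vnorm (x n) <= powerRZ c n * mu.

From Stdlib Require Import Reals ZArith Lra Lia.
From mathcomp Require Import ssreflect ssrfun ssrbool eqtype ssrnat seq fintype bigop.
Open Scope R_scope.

(* Write M for the maximum of the norms of the initial values
   x_0, x_{-1}, ..., x_{-k}.  We show, by strong induction on n >= -k, that
       |x_n| <= alpha^(n/(k+1)) * M.
   For -k <= n <= 0 the exponent is nonpositive, so the factor is >= 1 and the
   bound follows from |x_n| <= M.  For the step to n+1 >= 1, the contraction
   hypothesis gives |x_{n+1}| <= alpha * max_i |x_{n-i}|; every index n-i is at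
   least n-k, and since alpha < 1 the real power alpha^t is antitone in t, so
   each |x_{n-i}| <= alpha^((n-k)/(k+1)) M, and alpha * alpha^((n-k)/(k+1)) is
   exactly alpha^((n+1)/(k+1)). *)

Lemma Rpower_gt0 (a y : R) : 0 < Rpower a y.
Proof. exact: exp_pos. Qed.

Lemma Rpower_antitone (a y1 y2 : R) :
  0 < a < 1 -> y1 <= y2 -> Rpower a y2 <= Rpower a y1.
Proof.
  move=> Ha Hy; rewrite /Rpower.
  have Hln : ln a < 0 by rewrite -ln_1; apply: ln_increasing; lra.
  case: (Rle_lt_or_eq_dec _ _ Hy) => [Hlt | <-]; last by lra.
  by left; apply: exp_increasing; nra.
Qed.

Lemma Rpower_ge1 (a y : R) : 0 < a < 1 -> y <= 0 -> 1 <= Rpower a y.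
Proof.
  move=> Ha Hy; rewrite -(Rpower_O a); last by lra.
  exact: Rpower_antitone.
Qed.

Lemma Rpower_lt1 (a y : R) : 0 < a < 1 -> 0 < y -> Rpower a y < 1.
Proof.
  move=> Ha Hy; rewrite -(Rpower_O a); last by lra.
  have Hln : ln a < 0 by rewrite -ln_1; apply: ln_increasing; lra.
  by rewrite /Rpower; apply: exp_increasing; nra.
Qed.

Lemma maxk_ge (k : nat) (g : 'I_k.+1 -> R) (i : 'I_k.+1) : g i <= maxk g.
Proof.
  rewrite /maxk; have : i \in index_enum 'I_k.+1 := mem_index_enum i.
  elim: (index_enum _) => [|j r IH] //; rewrite in_cons big_cons.
  case/orP => [/eqP <- | Hi]; first exact: Rmax_l.
  exact: Rle_trans (IH Hi) (Rmax_r _ _).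
Qed.

Lemma maxk_lub (k : nat) (g : 'I_k.+1 -> R) (B : R) :
  0 <= B -> (forall i, g i <= B) -> maxk g <= B.
Proof.
  move=> HB Hg; rewrite /maxk.
  elim: (index_enum _) => [|j r IH]; first by rewrite big_nil.
  by rewrite big_cons; apply: Rmax_lub.
Qed.

Lemma maxk_ge0 (k : nat) (g : 'I_k.+1 -> R) : 0 <= maxk g.
Proof.
  rewrite /maxk; elim: (index_enum _) => [|j r IH]; first by rewrite big_nil; lra.
  by rewrite big_cons; apply: Rle_trans IH (Rmax_r _ _).
Qed.

Section SolutionBound.

Variables (X : BanachSpace) (k : nat) (f : nat -> ('I_k.+1 -> X) -> X).
Variable alpha : R.
Hypothesis alpha_in01 : 0 < alpha < 1.
Hypothesis f_contraction : forall (n : nat) (xi : 'I_k.+1 -> X),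
  vnorm (f n xi) <= alpha * maxk (fun i => vnorm (xi i)).
Variable x : Z -> X.
Hypothesis x_solution : is_solution f x.

Let M : R := maxk (fun i : 'I_k.+1 => vnorm (x (- Z.of_nat i)%Z)).

Let bounded_at (n : Z) : Prop :=
  vnorm (x n) <= Rpower alpha (IZR n / INR k.+1) * M.

Let k1_gt0 : 0 < INR k.+1.
Proof. by apply: lt_0_INR; lia. Qed.

Lemma initial_bound (n : Z) : (- Z.of_nat k <= n <= 0)%Z -> bounded_at n.
Proof.
  move=> Hn.
  have Hi : (Z.to_nat (- n) < k.+1)%coq_nat by lia.
  have Hxn : vnorm (x n) <= M.
    have -> : n = (- Z.of_nat (Ordinal (introT ltP Hi)))%Z by rewrite /=; lia.
    exact: maxk_ge.
  have Hpow : 1 <= Rpower alpha (IZR n / INR k.+1).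
    apply: Rpower_ge1 => //; rewrite /Rdiv.
    have : IZR n <= 0 by apply: IZR_le; lia.
    have : 0 < / INR k.+1 by apply: Rinv_0_lt_compat.
    nra.
  have : 0 <= M by apply: maxk_ge0.
  rewrite /bounded_at; nra.
Qed.

(* One step of the recursion gains exactly one factor alpha over the
   exponent attached to the oldest index n - k. *)
Lemma Rpower_shift (n : nat) :
  Rpower alpha (IZR (Z.of_nat n + 1) / INR k.+1)
  = alpha * Rpower alpha ((INR n - INR k) / INR k.+1).
Proof.
  rewrite -{2}(Rpower_1 alpha); last by lra.
  rewrite -Rpower_plus plus_IZR -INR_IZR_INZ S_INR; f_equal.
  by field; have := pos_INR k; lra.
Qed.

Lemma step_bound (n : nat) :
  (forall i : 'I_k.+1, bounded_at (Z.of_nat n - Z.of_nat i)) ->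
  bounded_at (Z.of_nat n + 1).
Proof.
  move=> Hprev; rewrite /bounded_at x_solution Rpower_shift Rmult_assoc.
  apply: Rle_trans (f_contraction _ _) _.
  apply: Rmult_le_compat_l; first lra.
  apply: maxk_lub => [|i].
    by apply: Rmult_le_pos; [left; apply: Rpower_gt0 | apply: maxk_ge0].
  apply: Rle_trans (Hprev i) _.
  apply: Rmult_le_compat_r; first exact: maxk_ge0.
  apply: Rpower_antitone => //; apply: Rmult_le_compat_r.
    by left; apply: Rinv_0_lt_compat.
  rewrite minus_IZR -!INR_IZR_INZ; apply: Rplus_le_compat_l; apply: Ropp_le_contravar.
  by apply: le_INR; have := ltn_ord i; move/ltP; lia.
Qed.

Lemma solution_bound (n : Z) :
  (- Z.of_nat k <= n)%Z -> vnorm (x n) <= Rpower alpha (IZR n / INR k.+1) * M.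
Proof.
  move=> Hn; rewrite -/(bounded_at n).
  suff Hall : forall N : nat, forall m : Z,
      (- Z.of_nat k <= m <= Z.of_nat N)%Z -> bounded_at m.
    by apply: (Hall (Z.to_nat n)); lia.
  elim => [|N IH] m Hm; first by apply: initial_bound; lia.
  case: (Z.le_gt_cases m (Z.of_nat N)) => [Hle | Hgt]; first by apply: IH; lia.
  have -> : m = (Z.of_nat N + 1)%Z by lia.
  apply: step_bound => i; apply: IH.
  by have := ltn_ord i; move/ltP; lia.
Qed.

End SolutionBound.

Theorem lemma1 (X : BanachSpace) (k : nat) (hk : (1 <= k)%nat)
  (f : nat -> ('I_k.+1 -> X) -> X) (alpha : R) (ha : 0 < alpha < 1)
  (hf : forall (n : nat) (xi : 'I_k.+1 -> X),
          vnorm (f n xi) <= alpha * maxk (fun i => vnorm (xi i))) :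
  (forall x : Z -> X, is_solution f x ->
     forall n : nat, (1 <= n)%nat ->
       vnorm (x (Z.of_nat n)) <=
         Rpower alpha (INR n / INR (k + 1))
         * maxk (fun i : 'I_k.+1 => vnorm (x (- Z.of_nat i)%Z)))
  /\ glob_exp_stable f.
Proof.
  split.
    move=> x hx n _; rewrite addn1 (INR_IZR_INZ n).
    by apply: (@solution_bound X k f alpha ha hf x hx); lia.
  have Hinv : 0 < / INR k.+1 by apply: Rinv_0_lt_compat; apply: lt_0_INR; lia.
  exists (Rpower alpha (/ INR k.+1)); split.
    by split; [apply: Rpower_gt0 | apply: Rpower_lt1].
  move=> x hx.
  pose M := maxk (fun i : 'I_k.+1 => vnorm (x (- Z.of_nat i)%Z)).
  have HM : 0 <= M by apply: maxk_ge0.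
  exists (M + 1); split; first lra.
  move=> n Hn; rewrite powerRZ_Rpower ?Rpower_mult; last exact: Rpower_gt0.
  rewrite (Rmult_comm (/ _)) -/(Rdiv _ _).
  apply: Rle_trans (@solution_bound X k f alpha ha hf x hx n Hn) _.
  by apply: Rmult_le_compat_l; [left; apply: Rpower_gt0 | rewrite /M; lra].
Qed.
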